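(* (1) In $\mathcal{N}ec$, every morphism $\varphi$ from $(n_1,\dots,n_k)$ to $(m)$ decomposes uniquely as $\varphi=\varphi_1*\dots*\varphi_k$, where each $\varphi_i:\square^{n_i}\to\square^m$ is a morphism of cubical sets (i.e. of $\square$) and $\varphi_1(\alpha)=\alpha$, $\varphi_i(\omega)=\varphi_{i+1}(\alpha)$ for $1\le i\le k-1$, and $\varphi_k(\omega)=\omega$. In particular $m\le n_1+\dots+n_k$. (2) Given a morphism $f:(n_1,\dots,n_k)\to(m_1,\dots,m_l)$ in $\mathcal{N}ec$, there exist a decomposition $(A_1,\dots,A_l)$ of the sequence $(n_1,\dots,n_k)$ into $l$ blocks and morphisms $f_j:A_j\to(m_j)$ in $\mathcal{N}ec$ such that $f=f_1\vee\dots\vee f_l$. This decomposition is unique if, for every $1\le i\le k$, the restriction of $f$ to the $i$-th bead $\square^{n_i}$ is not constant.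
   Context: Cubical sets: presheaves on the category $\square$ with objects $[1]^n$ and morphisms generated by faces $\partial_{i,\epsilon}$ (insert $\epsilon$ at coordinate $i$), degeneracies (delete a coordinate) and negative connections ($\gamma_{i,0}$ replaces $(x_i,x_{i+1})$ by $\max(x_i,x_{i+1})$); $\square^n$ is representable, with vertices the subsets of $\{1,\dots,n\}$, $\alpha=\emptyset$, $\omega=\{1,\dots,n\}$. Double-pointed cubical sets $X_{a,b}$ are cubical sets with two chosen vertices; morphisms preserve both. For $X_{a,b},Y_{u,v}$, $X\vee Y$ is the pushout identifying $b$ with $u$, pointed by $(a,v)$; for double-pointed maps $f,g$, $f\vee g$ is the induced map on wedges. For a cubical set $X$ with vertices $u,v,w$ and maps $f:S_{a,b}\to X_{u,v}$, $g:T_{a',b'}\to X_{v,w}$, $f*g:(S\vee T)_{a,b'}\to X_{u,w}$ is the induced map from the pushout. A necklace, identified with the sequence $(n_1,\dots,n_k)$ of positive integers, is $\square^{n_1}\vee\dots\vee\square^{n_k}$ pointed by the $\alpha$ of the first and the $\omega$ of the last cube; its $i$-th bead is the canonical map $\square^{n_i}\to T$. $\mathcal{N}ec$ is the full subcategory of double-pointed cubical sets on necklaces. A decomposition of a nonempty sequence $(n_1,\dots,n_k)$ into $l$ blocks is a tuple $(A_1,\dots,A_l)$ of nonempty sequences whose concatenation is $(n_1,\dots,n_k)$; each $A_j$ is regarded as a necklace. *)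

From HB Require Import structures.
From mathcomp Require Import all_boot.
Set Implicit Arguments. Unset Strict Implicit. Unset Printing Implicit Defensive.

(* points of [1]^n are boolean n-tuples (false = 0, true = 1) *)
Definition tup (k : nat) (s : seq bool) : k.-tuple bool :=
  [tuple nth false s j | j < k].

(* set maps [1]^n -> [1]^m (finite functions: Leibniz = extensional equality) *)
Definition cmap (n m : nat) := {ffun n.-tuple bool -> m.-tuple bool}.

Definition cmap_id n : cmap n n := [ffun x => x].
Definition cmap_comp n m p (g : cmap m p) (f : cmap n m) : cmap n p :=
  [ffun x => g (f x)].

(* face: insert e at (0-based) coordinate i, [1]^n -> [1]^(n+1) *)
Definition face n (i : 'I_n.+1) (e : bool) : cmap n n.+1 :=
  [ffun x : n.-tuple bool => tup n.+1 (take i x ++ e :: drop i x)].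
(* degeneracy: delete (0-based) coordinate i, [1]^(n+1) -> [1]^n *)
Definition degen n (i : 'I_n.+1) : cmap n.+1 n :=
  [ffun x : n.+1.-tuple bool => tup n (take i x ++ drop i.+1 x)].
(* negative connection gamma_{i,0}: replace (x_i, x_{i+1}) by max(x_i, x_{i+1}) *)
Definition conn n (i : 'I_n.+1) : cmap n.+2 n.+1 :=
  [ffun x : n.+2.-tuple bool =>
     tup n.+1 (take i x ++ (nth false x i || nth false x i.+1) :: drop i.+2 x)].

Inductive is_cube : forall n m, cmap n m -> Prop :=
| cube_id n : is_cube (cmap_id n)
| cube_face n (i : 'I_n.+1) e : is_cube (face i e)
| cube_degen n (i : 'I_n.+1) : is_cube (degen i)
| cube_conn n (i : 'I_n.+1) : is_cube (conn i)
| cube_comp n m p (g : cmap m p) (f : cmap n m) :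
    is_cube g -> is_cube f -> is_cube (cmap_comp g f).

Definition cube n m := {f : cmap n m | is_cube f}.

Definition ccomp n m p (g : cube m p) (f : cube n m) : cube n p :=
  exist _ (cmap_comp (proj1_sig g) (proj1_sig f))
          (cube_comp (proj2_sig g) (proj2_sig f)).

Definition cconst n d (e : bool) : cmap n d := [ffun _ => [tuple of nseq d e]].

Lemma cube_const n d e : is_cube (cconst n d e).
Proof.
elim: d => [|d IH].
  elim: n => [|n IHn].
    have -> : cconst 0 0 e = cmap_id 0.
      by apply/ffunP => x; rewrite !ffunE; apply: eq_from_tnth; case.
    exact: cube_id.
  have -> : cconst n.+1 0 e = cmap_comp (cconst n 0 e) (degen ord0).
    by apply/ffunP => x; rewrite !ffunE; apply: eq_from_tnth; case.
  by apply: cube_comp; [exact: IHn | exact: cube_degen].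
have -> : cconst n d.+1 e = cmap_comp (face ord0 e) (cconst n d e).
  apply/ffunP => x; rewrite !ffunE; apply: eq_from_tnth => j.
  rewrite tnth_mktuple tnth_nseq take0 drop0 /=.
  case: j => [[|j] Hj] //=. by rewrite nth_nseq -ltnS Hj.
by apply: cube_comp; [exact: cube_face | exact: IH].
Qed.

Definition constc n d e : cube n d := exist _ (cconst n d e) (cube_const n d e).

Definition calpha d : cube 0 d := constc 0 d false.
Definition comega d : cube 0 d := constc 0 d true.

Record psh := Psh { cells : nat -> Type;
                    act : forall n m, cube n m -> cells m -> cells n }.

Definition is_natural (X Y : psh) (F : forall n, cells X n -> cells Y n) :=
  forall n m (g : cube n m) (x : cells X m), F n (act g x) = act g (F m x).

Definition rep (d : nat) : psh :=
  @Psh (fun n => cube n d) (fun n m g f => ccomp f g).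

(* A necklace (n_1,...,n_k) is represented by ns = [:: n_1; ...; n_k].
   Its n-cells are the levelwise pushout (wedge) of the beads: pairs (i, f)
   with f an n-cell of bead i (of dimension nth 0 ns i), where the constant
   cell at alpha of bead i (i > 0) is identified with the constant cell at
   omega of bead i-1.  We use the normal form with the smallest bead index. *)
Definition nbeads (ns : seq nat) := (size ns).-1.+1.
Definition is_alpha n d (f : cube n d) := proj1_sig f == cconst n d false.

Definition pre n := (nat * {d : nat & cube n d})%type.
Definition valid (ns : seq nat) n (p : pre n) :=
  [&& p.1 < nbeads ns, tag p.2 == nth 0 ns p.1 &
      (p.1 == 0) || ~~ is_alpha (tagged p.2)].
Definition ncell (ns : seq nat) n := {p : pre n | valid ns p}.

Fixpoint normp (ns : seq nat) n (i : nat) : forall d, cube n d -> pre n :=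
  match i with
  | 0 => fun d f => (0, existT _ d f)
  | i'.+1 => fun d f => if is_alpha f then normp ns i' (constc n (nth 0 ns i') true)
                        else (i'.+1, existT _ d f)
  end.

Lemma valid0 ns n : valid ns (0, existT _ (nth 0 ns 0) (constc n _ false)).
Proof. by rewrite /valid /= eqxx. Qed.
Definition ncell0 ns n : ncell ns n := exist (fun p => valid ns p) _ (@valid0 ns n).

(* the class of a representative (i, f); (ncell0 is only a never-used default) *)
Definition mkcell ns n (i : nat) d (f : cube n d) : ncell ns n :=
  insubd (ncell0 ns n) (normp ns i f).

Definition neck (ns : seq nat) : psh :=
  @Psh (ncell ns)
       (fun n m g c => mkcell ns (proj1_sig c).1 (ccomp (tagged (proj1_sig c).2) g)).

(* i-th bead []^(n_i) -> necklace (0-based index) *)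
Definition bead (ns : seq nat) (i : nat) n (f : cube n (nth 0 ns i)) : ncell ns n :=
  mkcell ns i f.
Arguments bead ns i {n} f.
Definition nalpha ns : ncell ns 0 := bead ns 0 (calpha _).
Definition nomega ns : ncell ns 0 := bead ns (size ns).-1 (comega _).

Definition is_nec_map (ns ms : seq nat) (F : forall n, ncell ns n -> ncell ms n) :=
  [/\ is_natural (X := neck ns) (Y := neck ms) F,
      F 0 (nalpha ns) = nalpha ms & F 0 (nomega ns) = nomega ms].

(* inclusion of a sub-necklace A (a block of ns starting at bead index off)
   into ns : the cell (i, f) of A goes to the cell (off + i, f) of ns *)
Definition shift (A ns : seq nat) (off : nat) n (c : ncell A n) : ncell ns n :=
  mkcell ns (off + (proj1_sig c).1) (tagged (proj1_sig c).2).

Definition bead_const (ns ms : seq nat) (F : forall n, ncell ns n -> ncell ms n) i :=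
  exists v : ncell ms 0, forall n (x : cube n (nth 0 ns i)),
      F n (bead ns i x) = act (p := neck ms) (constc n 0 false) v.

Definition block_off (As : seq (seq nat)) (j : nat) := sumn (map size (take j As)).

(* Since the vertex alpha of bead i+1 is glued to the vertex omega of bead i,
   every cell of a necklace has a normal form: a bead index, as small as
   possible, and a cube map into that bead.  A map of necklaces is determined
   by the normal forms of the images of the top cells of the beads of its
   source.  For maps into a single cube this is the decomposition (1), and the
   bound m <= n_1 + ... + n_k holds because cube maps do not increase Hamming
   distance, while alpha and omega of the m-cube are at distance m.  For maps
   into (m_1, ..., m_l), the bead index t(i) of the image of bead i is
   nondecreasing in i with steps of at most one, and where it steps, bead i
   ends at omega and bead i+1 starts at alpha; the blocks are the fibres of t.
   If no bead is mapped to a vertex, every decomposition has to put bead i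
   into block t(i), which gives uniqueness. *)
From mathcomp Require Import all_boot zify.
From Stdlib Require Import ProofIrrelevance Eqdep_dec.
From Stdlib Require PeanoNat.
Set Implicit Arguments. Unset Strict Implicit. Unset Printing Implicit Defensive.

Lemma cube_val_inj n d (x y : cube n d) : proj1_sig x = proj1_sig y -> x = y.
Proof.
case: x y => [x Hx] [y Hy] /= E; subst y; congr exist; exact: proof_irrelevance.
Qed.

Lemma existT_cube_inj n d (x y : cube n d) :
  existT (fun d => cube n d) d x = existT _ d y -> x = y.
Proof. exact: (inj_pair2_eq_dec _ PeanoNat.Nat.eq_dec). Qed.

Lemma pre_eq_const n a b d d' (y : cube n d) (y' : cube n d') :
  (a, existT _ d y) = (b, existT _ d' y') :> pre n ->
  a = b /\ forall e, (proj1_sig y == cconst n d e) = (proj1_sig y' == cconst n d' e).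
Proof.
move=> E; have /= Ed := congr1 (fun p : pre n => projT1 p.2) E; subst d'.
by case: E => -> /existT_cube_inj ->.
Qed.

Definition idc d : cube d d := exist _ (cmap_id d) (cube_id d).

Lemma ccomp_idl n d (x : cube n d) : ccomp (idc d) x = x.
Proof. by apply: cube_val_inj; apply/ffunP => y; rewrite /= !ffunE. Qed.

Lemma ccomp_const n m d e (g : cube n m) : ccomp (constc m d e) g = constc n d e.
Proof. by apply: cube_val_inj; apply/ffunP => x; rewrite /= !ffunE. Qed.

Definition is_omega n d (f : cube n d) := proj1_sig f == cconst n d true.

Lemma is_alpha_ccomp n m d (y : cube m d) (g : cube n m) :
  is_alpha y -> is_alpha (ccomp y g).
Proof. by move/eqP=> E; apply/eqP/ffunP => x; rewrite /= !ffunE E ffunE. Qed.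

Lemma cconst_neq n d e e' : 0 < d -> e != e' -> cconst n d e != cconst n d e'.
Proof.
move=> d_gt0 ne_ee'; apply/negP => /eqP /ffunP /(_ [tuple of nseq n false]).
rewrite !ffunE => /(congr1 (fun t : d.-tuple bool => nth false t 0)) /=.
by case: d d_gt0 => //= d _ E; rewrite E eqxx in ne_ee'.
Qed.

Lemma is_alpha_omega n d : 0 < d -> is_alpha (constc n d true) = false.
Proof. by move=> d_gt0; apply/negbTE; apply: cconst_neq. Qed.

(* Transport along [d = d'] when it holds; a junk constant map otherwise. *)
Definition recast n d d' (y : cube n d) : cube n d' :=
  match PeanoNat.Nat.eq_dec d d' with
  | left e => eq_rect d (cube n) y d' e
  | right _ => constc n d' false
  end.

Lemma recast_id n d (y : cube n d) : recast d y = y.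
Proof.
rewrite /recast; case: PeanoNat.Nat.eq_dec => // e.
by rewrite (UIP_dec PeanoNat.Nat.eq_dec e erefl).
Qed.

Lemma recast_alpha n d d' (y : cube n d) : is_alpha y -> recast d' y = constc n d' false.
Proof.
move/eqP=> E; rewrite /recast; case: PeanoNat.Nat.eq_dec => // e.
by subst d'; apply: cube_val_inj; rewrite /= E.
Qed.

Lemma recast_omega n d d' (y : cube n d) : d = d' -> is_omega y -> recast d' y = constc n d' true.
Proof.
by move=> e /eqP E; subst d'; rewrite recast_id; apply: cube_val_inj; rewrite /= E.
Qed.

Lemma recast_ccomp n m d d' (y : cube m d) (g : cube n m) : d = d' ->
  recast d' (ccomp y g) = ccomp (recast d' y) g.
Proof. by move=> e; subst d'; rewrite !recast_id. Qed.

Lemma recast_const n d d' e : d = d' -> recast d' (constc n d e) = constc n d' e.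
Proof. by move=> e'; subst d'; rewrite recast_id. Qed.

Lemma all_pos_nth (s : seq nat) j : all (fun d => 0 < d) s -> j < size s -> 0 < nth 0 s j.
Proof. by move/allP=> s_pos j_lt; apply/s_pos/mem_nth. Qed.

(** * Cube maps are monotone and do not increase Hamming distance *)

Definition le_bits (s t : seq bool) := forall j, nth false s j ==> nth false t j.

Lemma le_bits_take i s t : le_bits s t -> le_bits (take i s) (take i t).
Proof.
move=> le_st j; case: (ltnP j i) => ji; first by rewrite !nth_take.
by rewrite nth_default // size_take; case: ltnP => // si; apply: leq_trans si ji.
Qed.

Lemma le_bits_drop i s t : le_bits s t -> le_bits (drop i s) (drop i t).
Proof. by move=> le_st j; rewrite !nth_drop. Qed.

Lemma le_bits_cat s1 s2 t1 t2 : size s1 = size t1 ->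
  le_bits s1 t1 -> le_bits s2 t2 -> le_bits (s1 ++ s2) (t1 ++ t2).
Proof. by move=> eq_sz le1 le2 j; rewrite !nth_cat eq_sz; case: ifP. Qed.

Lemma le_bits_cons a b s t : a ==> b -> le_bits s t -> le_bits (a :: s) (b :: t).
Proof. by move=> le_ab le_st; case. Qed.

Definition hamming (s t : seq bool) := count (fun p => p.1 != p.2) (zip s t).

Lemma hamming_cat s1 s2 t1 t2 : size s1 = size t1 ->
  hamming (s1 ++ s2) (t1 ++ t2) = hamming s1 t1 + hamming s2 t2.
Proof. by move=> eq_sz; rewrite /hamming zip_cat // count_cat. Qed.

Lemma hamming_cons a b s t : hamming (a :: s) (b :: t) = (a != b) + hamming s t.
Proof. by []. Qed.

Lemma hamming_take_drop i s t : size s = size t ->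
  hamming s t = hamming (take i s) (take i t) + hamming (drop i s) (drop i t).
Proof.
move=> eq_sz; rewrite -{1}(cat_take_drop i s) -{1}(cat_take_drop i t) hamming_cat //.
by rewrite !size_take eq_sz.
Qed.

Lemma hamming_refl s : hamming s s = 0.
Proof. by elim: s => //= a s IH; rewrite hamming_cons eqxx. Qed.

Lemma hamming_triangle s t u : size s = size t -> size t = size u ->
  hamming s u <= hamming s t + hamming t u.
Proof.
elim: s t u => [|a s IH] [|b t] [|c u] //= [st] [tu].
by rewrite !hamming_cons; have := IH _ _ st tu; case: a; case: b; case: c => /=; lia.
Qed.

Lemma hamming_nseq k : hamming (nseq k false) (nseq k true) = k.
Proof. by elim: k => //= k IH; rewrite hamming_cons IH. Qed.

Lemma hamming_chain k (a : nat -> k.-tuple bool) (s : seq nat) :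
  (forall i, i < size s -> hamming (a i) (a i.+1) <= nth 0 s i) ->
  hamming (a 0) (a (size s)) <= sumn s.
Proof.
elim: s a => [|x s IH] a /= le_a; first by rewrite hamming_refl.
apply: leq_trans (hamming_triangle (t := a 1) _ _) _; rewrite ?size_tuple //.
by apply: leq_add; [exact: le_a 0 isT | exact: IH (fun i => a i.+1) (fun i => le_a i.+1)].
Qed.

Definition monotone n m (f : cmap n m) :=
  forall x y : n.-tuple bool, le_bits x y -> le_bits (f x) (f y).
Definition nonexpansive n m (f : cmap n m) :=
  forall x y : n.-tuple bool, hamming (f x) (f y) <= hamming x y.

Lemma tupE k (s : seq bool) : size s = k -> val (tup k s) = s.
Proof.
move=> sz_s; apply: (@eq_from_nth _ false); first by rewrite size_tuple.
move=> j; rewrite size_tuple => jk.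
by rewrite -[LHS](tnth_nth false (tup k s) (Ordinal jk)) /tup tnth_mktuple.
Qed.

Lemma face_val n (i : 'I_n.+1) e (x : n.-tuple bool) :
  val (face i e x) = take i x ++ e :: drop i x.
Proof.
rewrite ffunE tupE // size_cat /= size_take size_drop size_tuple.
by have i_lt := ltn_ord i; case: ltnP => ?; lia.
Qed.

Lemma degen_val n (i : 'I_n.+1) (x : n.+1.-tuple bool) :
  val (degen i x) = take i x ++ drop i.+1 x.
Proof.
rewrite ffunE tupE // size_cat size_take size_drop size_tuple.
by have i_lt := ltn_ord i; case: ltnP => ?; lia.
Qed.

Lemma conn_val n (i : 'I_n.+1) (x : n.+2.-tuple bool) :
  val (conn i x) = take i x ++ (nth false x i || nth false x i.+1) :: drop i.+2 x.
Proof.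
rewrite ffunE tupE // size_cat /= size_take size_drop size_tuple.
by have i_lt := ltn_ord i; case: ltnP => ?; lia.
Qed.

Lemma face_monotone n (i : 'I_n.+1) e : monotone (face i e).
Proof.
move=> x y le_xy; rewrite !face_val; apply: le_bits_cat.
- by rewrite !size_take !size_tuple.
- exact: le_bits_take.
- by apply: le_bits_cons; [case: e | exact: le_bits_drop].
Qed.

Lemma face_nonexpansive n (i : 'I_n.+1) e : nonexpansive (face i e).
Proof.
move=> x y; rewrite !face_val hamming_cat; last by rewrite !size_take !size_tuple.
by rewrite hamming_cons eqxx add0n -hamming_take_drop // !size_tuple.
Qed.

Lemma degen_monotone n (i : 'I_n.+1) : monotone (degen i).
Proof.
move=> x y le_xy; rewrite !degen_val; apply: le_bits_cat.
- by rewrite !size_take !size_tuple.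
- exact: le_bits_take.
- exact: le_bits_drop.
Qed.

Lemma degen_nonexpansive n (i : 'I_n.+1) : nonexpansive (degen i).
Proof.
move=> x y; rewrite !degen_val hamming_cat; last by rewrite !size_take !size_tuple.
rewrite (hamming_take_drop i (s := x) (t := y)) ?size_tuple // leq_add2l.
have i_lt : i < n.+1 := ltn_ord i.
rewrite (drop_nth false (s := x) (n := i)) ?size_tuple //.
by rewrite (drop_nth false (s := y) (n := i)) ?size_tuple // hamming_cons leq_addl.
Qed.

Lemma conn_monotone n (i : 'I_n.+1) : monotone (conn i).
Proof.
move=> x y le_xy; rewrite !conn_val; apply: le_bits_cat.
- by rewrite !size_take !size_tuple.
- exact: le_bits_take.
apply: le_bits_cons; last exact: le_bits_drop.
by have := le_xy i; have := le_xy i.+1; do 4 case: nth.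
Qed.

Lemma conn_nonexpansive n (i : 'I_n.+1) : nonexpansive (conn i).
Proof.
move=> x y; rewrite !conn_val hamming_cat; last by rewrite !size_take !size_tuple.
rewrite (hamming_take_drop i (s := x) (t := y)) ?size_tuple // leq_add2l.
have i_lt : i < n.+2 := leq_trans (ltn_ord i) (leqnSn _).
have i1_lt : i.+1 < n.+2 by rewrite ltnS (ltn_ord i).
rewrite (drop_nth false (s := x) (n := i)) ?size_tuple //.
rewrite (drop_nth false (s := y) (n := i)) ?size_tuple //.
rewrite (drop_nth false (s := x) (n := i.+1)) ?size_tuple //.
rewrite (drop_nth false (s := y) (n := i.+1)) ?size_tuple //.
by rewrite !hamming_cons addnA leq_add2r; do 4 case: nth.
Qed.

Lemma cube_monotone_nonexpansive n m (f : cmap n m) :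
  is_cube f -> monotone f /\ nonexpansive f.
Proof.
elim=> {n m f} [n | n i e | n i | n i | n m p g f _ [mono_g lip_g] _ [mono_f lip_f]].
- by split=> x y; rewrite !ffunE.
- exact: conj (face_monotone i e) (face_nonexpansive i e).
- exact: conj (degen_monotone i) (degen_nonexpansive i).
- exact: conj (conn_monotone i) (conn_nonexpansive i).
split=> x y; rewrite !ffunE; first by move=> le_xy; apply/mono_g/mono_f.
exact: leq_trans (lip_g _ _) (lip_f _ _).
Qed.

Lemma is_alpha_of_omega n d (y : cube n d) :
  is_alpha (ccomp y (constc 0 n true)) -> is_alpha y.
Proof.
move=> /eqP /ffunP /(_ [tuple]); rewrite /= !ffunE => y_top.
have [y_mono _] := cube_monotone_nonexpansive (proj2_sig y).
apply/eqP/ffunP => x; rewrite ffunE; apply: val_inj.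
apply: (@eq_from_nth _ false) => [|j _]; first by rewrite !size_tuple.
have le_top : le_bits x [tuple of nseq n true].
  move=> k; rewrite /= nth_nseq; case: ltnP => k_lt; first by rewrite implybT.
  by rewrite nth_default // size_tuple.
by have := y_mono _ _ le_top j; rewrite y_top /= nth_nseq if_same; case: nth.
Qed.

(** * Normal forms of necklace cells *)

Definition pnorm ns n (p : pre n) : pre n := normp ns p.1 (tagged p.2).
Definition pcell ns n (p : pre n) : ncell ns n := mkcell ns p.1 (tagged p.2).
Definition pact n m (g : cube n m) (p : pre m) : pre n :=
  (p.1, existT _ (tag p.2) (ccomp (tagged p.2) g)).

Lemma act_neckE ns n m (g : cube n m) (c : ncell ns m) :
  act (p := neck ns) g c = pcell ns (pact g (proj1_sig c)).
Proof. by []. Qed.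

Lemma pcellE ns n (p : pre n) : pcell ns p = insubd (ncell0 ns n) (pnorm ns p).
Proof. by []. Qed.

Lemma nbeadsE (ns : seq nat) : ns != [::] -> nbeads ns = size ns.
Proof. by case: ns. Qed.

Lemma ncell_bead_lt ns n (c : ncell ns n) : (proj1_sig c).1 < nbeads ns.
Proof. by case/and3P: (proj2_sig c). Qed.

Lemma ncell_dim ns n (c : ncell ns n) : tag (proj1_sig c).2 = nth 0 ns (proj1_sig c).1.
Proof. by case/and3P: (proj2_sig c) => _ /eqP. Qed.

Lemma pnorm_act ns n m (g : cube n m) (p : pre m) :
  pnorm ns (pact g (pnorm ns p)) = pnorm ns (pact g p).
Proof.
case: p => i [d y]; rewrite /pnorm /=.
elim: i d y => [|i IH] d y //=.
case: ifP => // y_alpha.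
by rewrite (IH _ (constc m (nth 0 ns i) true)) /= ccomp_const (is_alpha_ccomp g y_alpha).
Qed.

Lemma pnorm_valid ns n (p : pre n) :
  p.1 < nbeads ns -> tag p.2 = nth 0 ns p.1 -> valid ns (pnorm ns p).
Proof.
case: p => i [d y]; rewrite /pnorm /=.
elim: i d y => [|i IH] d y /= i_lt dE; first by apply/and3P; split => //=; apply/eqP.
case: ifP => y_alpha; first by apply: IH => //; apply: ltnW.
by apply/and3P; split => //=; [apply/eqP | rewrite y_alpha].
Qed.

Lemma pnorm_id ns n (p : pre n) : valid ns p -> pnorm ns p = p.
Proof.
case: p => [[|i] [d y]]; rewrite /pnorm /valid //= => /and3P [_ _ y_alpha].
by rewrite (negbTE y_alpha).
Qed.

Lemma val_pcell ns n (p : pre n) :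
  p.1 < nbeads ns -> tag p.2 = nth 0 ns p.1 -> proj1_sig (pcell ns p) = pnorm ns p.
Proof. by move=> p_lt p_dim; rewrite pcellE insubdK //; apply: pnorm_valid. Qed.

Lemma pcell_val ns n (c : ncell ns n) : pcell ns (proj1_sig c) = c.
Proof. by rewrite pcellE pnorm_id ?valKd //; exact: (proj2_sig c). Qed.

Lemma act_pcell ns n m (g : cube n m) (p : pre m) :
  p.1 < nbeads ns -> tag p.2 = nth 0 ns p.1 ->
  act (p := neck ns) g (pcell ns p) = pcell ns (pact g p).
Proof.
by move=> p_lt p_dim; rewrite act_neckE val_pcell // !pcellE pnorm_act.
Qed.

(* Positivity ensures that omega of the previous bead is not alpha, so
   normalization stops after one step. *)
Lemma pnormE ns n i d (y : cube n d) : all (fun d => 0 < d) ns -> i <= size ns ->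
  pnorm ns (i, existT _ d y) =
  if (0 < i) && is_alpha y then (i.-1, existT _ _ (constc n (nth 0 ns i.-1) true))
  else (i, existT _ d y).
Proof.
rewrite /pnorm /=; case: i => [|i] //= ns_pos i_le.
case: ifP => // _; case: i i_le => [|i] i_le //=.
by rewrite is_alpha_omega // all_pos_nth.
Qed.

Lemma val_pcellE ns n j d (y : cube n d) : ns != [::] -> all (fun d => 0 < d) ns ->
  j < size ns -> d = nth 0 ns j ->
  proj1_sig (pcell ns (j, existT _ d y)) =
  if (0 < j) && is_alpha y then (j.-1, existT _ _ (constc n (nth 0 ns j.-1) true))
  else (j, existT _ d y).
Proof. by move=> ns_ne ns_pos j_lt dE; rewrite val_pcell ?nbeadsE // pnormE // ltnW. Qed.

Lemma val_nalpha ns : ns != [::] ->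
  proj1_sig (nalpha ns) = (0, existT _ _ (calpha (nth 0 ns 0))).
Proof.
move=> ns_ne; rewrite -[nalpha ns]/(pcell ns (0, existT _ _ (calpha (nth 0 ns 0)))).
by rewrite val_pcell // nbeadsE //; case: (ns) ns_ne.
Qed.

Lemma val_nomega ns : ns != [::] -> all (fun d => 0 < d) ns ->
  proj1_sig (nomega ns) = ((size ns).-1, existT _ _ (comega (nth 0 ns (size ns).-1))).
Proof.
move=> ns_ne ns_pos; have last_lt : (size ns).-1 < size ns by case: (ns) ns_ne.
rewrite -[nomega ns]/(pcell ns (_, existT _ _ (comega (nth 0 ns (size ns).-1)))).
by rewrite val_pcellE // is_alpha_omega ?andbF ?all_pos_nth.
Qed.

Lemma bead_act ns i n m (x : cube m (nth 0 ns i)) (g : cube n m) :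
  i < nbeads ns -> bead ns i (ccomp x g) = act (p := neck ns) g (bead ns i x).
Proof. by move=> i_lt; rewrite -[bead ns i x]/(pcell ns (i, existT _ _ x)) act_pcell. Qed.

Lemma bead_junction ns i : bead ns i.+1 (calpha _) = bead ns i (comega _).
Proof. by rewrite /bead /mkcell /= /is_alpha eqxx. Qed.

Lemma bead1_tagged m n (c : ncell [:: m] n) :
  bead [:: m] 0 (recast m (tagged (proj1_sig c).2)) = c.
Proof.
case: c => [[[|i] [d y]] c_valid] /=; last by case/and3P: (c_valid).
have /and3P [_ /eqP /= dE _] := c_valid; subst d.
by rewrite recast_id; exact: (pcell_val (exist _ (0, existT _ m y) c_valid)).
Qed.

Lemma bead1_inj m n (y z : cube n m) : bead [:: m] 0 y = bead [:: m] 0 z -> y = z.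
Proof.
move/(congr1 (@proj1_sig _ _)).
rewrite -[bead [:: m] 0 y]/(pcell [:: m] (0, existT _ m y)).
rewrite -[bead [:: m] 0 z]/(pcell [:: m] (0, existT _ m z)).
by rewrite !val_pcell //= => -[/existT_cube_inj].
Qed.

(** * Maps into a single cube *)

Definition bead_factorization ns m (F : forall n, ncell ns n -> ncell [:: m] n)
    (phi : forall i n, cube n (nth 0 ns i) -> cube n m) :=
  [/\ forall i, i < size ns -> is_natural (X := rep (nth 0 ns i)) (Y := rep m) (phi i),
      phi 0 0 (calpha _) = calpha m,
      forall i, i.+1 < size ns -> phi i 0 (comega _) = phi i.+1 0 (calpha _),
      phi (size ns).-1 0 (comega _) = comega m &
      forall i n (x : cube n (nth 0 ns i)), i < size ns ->
        F n (bead ns i x) = bead [:: m] 0 (phi i n x)].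

Lemma bead_factorization_exists ns m (F : forall n, ncell ns n -> ncell [:: m] n) :
  ns != [::] -> is_nec_map F ->
  exists phi, bead_factorization F phi.
Proof.
move=> ns_ne [F_nat F_alpha F_omega].
pose phi i n (x : cube n (nth 0 ns i)) := recast m (tagged (proj1_sig (F n (bead ns i x))).2).
have F_bead i n x : F n (bead ns i x) = bead [:: m] 0 (phi i n x) by rewrite bead1_tagged.
exists phi; split=> [i i_lt n' m' g x | | i i_lt | | i n x _] //; apply: bead1_inj.
- by rewrite -F_bead /= bead_act ?nbeadsE // F_nat F_bead -bead_act.
- by rewrite -F_bead.
- by rewrite -!F_bead bead_junction.
- by rewrite -F_bead.
Qed.

Lemma bead_factorization_unique ns m (F : forall n, ncell ns n -> ncell [:: m] n)
    (phi psi : forall i n, cube n (nth 0 ns i) -> cube n m) :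
  bead_factorization F phi -> bead_factorization F psi ->
  forall i n (x : cube n (nth 0 ns i)), i < size ns -> phi i n x = psi i n x.
Proof.
by move=> [_ _ _ _ F_phi] [_ _ _ _ F_psi] i n x i_lt; apply: bead1_inj; rewrite -F_phi // -F_psi.
Qed.

Definition vertex d (v : cube 0 d) : d.-tuple bool := proj1_sig v [tuple].

Lemma vertex_const d e : vertex (constc 0 d e) = [tuple of nseq d e].
Proof. by rewrite /vertex /= ffunE. Qed.

(* By naturality [phi] is determined by the cube map [phi id], which is nonexpansive. *)
Lemma natural_vertex_hamming d m (phi : forall n, cube n d -> cube n m) :
  is_natural (X := rep d) (Y := rep m) phi ->
  hamming (vertex (phi 0 (calpha d))) (vertex (phi 0 (comega d))) <= d.
Proof.
move=> phi_nat.
have phi0 e : vertex (phi 0 (constc 0 d e)) = proj1_sig (phi d (idc d)) [tuple of nseq d e].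
  by rewrite -[constc 0 d e]ccomp_idl (phi_nat 0 d _ (idc d)) /vertex /= !ffunE.
rewrite !phi0; have [_ lip] := cube_monotone_nonexpansive (proj2_sig (phi d (idc d))).
by apply: leq_trans (lip _ _) _; rewrite hamming_nseq.
Qed.

Lemma cube_chain_dim_le ns m (phi : forall i n, cube n (nth 0 ns i) -> cube n m) :
  ns != [::] ->
  (forall i, i < size ns -> is_natural (X := rep (nth 0 ns i)) (Y := rep m) (phi i)) ->
  phi 0 0 (calpha _) = calpha m ->
  (forall i, i.+1 < size ns -> phi i 0 (comega _) = phi i.+1 0 (calpha _)) ->
  phi (size ns).-1 0 (comega _) = comega m ->
  m <= sumn ns.
Proof.
move=> ns_ne phi_nat phi_alpha phi_junction phi_omega.
pose a i := vertex (if i < size ns then phi i 0 (calpha _) else phi (size ns).-1 0 (comega _)).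
have size_gt0 : 0 < size ns by case: (ns) ns_ne.
have a_step i : i < size ns -> a i.+1 = vertex (phi i 0 (comega _)).
  rewrite /a => i_lt; case: ltnP => [i1_lt | i1_ge]; first by rewrite phi_junction.
  by have -> : i = (size ns).-1 by lia.
have a0 : a 0 = vertex (calpha m) by rewrite /a size_gt0 phi_alpha.
have a_last : a (size ns) = vertex (comega m) by rewrite /a ltnn phi_omega.
have := @hamming_chain m a ns; rewrite a0 a_last !vertex_const hamming_nseq.
apply=> i i_lt; rewrite a_step // {1}/a i_lt.
exact/natural_vertex_hamming/phi_nat.
Qed.

(** * Sub-necklaces and projections onto beads *)

Lemma ltn_nbeads (s : seq nat) i : i < size s -> i < nbeads s.
Proof. by case: s. Qed.

Definition pshift n off (p : pre n) : pre n := (off + p.1, p.2).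

Section Shift.
Variables (A ns : seq nat) (off : nat).
Hypothesis A_in_ns : forall i, i < size A -> nth 0 A i = nth 0 ns (off + i).

Lemma pnorm_shift n (q : pre n) : q.1 < size A ->
  pnorm ns (pshift off (pnorm A q)) = pnorm ns (pshift off q).
Proof.
case: q => i [d y]; rewrite /pnorm /pshift /=.
elim: i d y => [|i IH] d y //= i_lt.
rewrite addnS /=; case: ifP => y_alpha; last by rewrite /= addnS /= y_alpha.
rewrite IH; last exact: ltnW.
by rewrite /= A_in_ns // ltnW.
Qed.

Lemma shift_pcell n (q : pre n) : q.1 < size A -> tag q.2 = nth 0 A q.1 ->
  shift ns off (pcell A q) = pcell ns (pshift off q).
Proof.
move=> q_lt q_dim; rewrite /shift -[mkcell _ _ _]/(pcell ns (pshift off (proj1_sig (pcell A q)))).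
by rewrite val_pcell ?ltn_nbeads // !pcellE pnorm_shift.
Qed.

Lemma shift_natural : A != [::] -> off + size A <= size ns ->
  is_natural (X := neck A) (Y := neck ns) (shift ns off).
Proof.
move=> A_ne A_le n m g c.
have c_lt : (proj1_sig c).1 < size A by rewrite -nbeadsE ?ncell_bead_lt.
have c_dim := ncell_dim c.
rewrite -{2}[c]pcell_val shift_pcell // act_pcell; first last.
- by rewrite /= c_dim A_in_ns.
- by apply: ltn_nbeads; apply: leq_trans A_le; rewrite /= ltn_add2l.
by rewrite act_neckE shift_pcell.
Qed.

End Shift.

(* Beads before the [j]-th go to alpha, beads after it to omega. *)
Definition pproj (ms : seq nat) j n (p : pre n) : pre n :=
  (0, existT _ (nth 0 ms j)
        (if p.1 == j then recast (nth 0 ms j) (tagged p.2)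
         else constc n (nth 0 ms j) (j < p.1))).
Definition proj (ms : seq nat) j n (c : ncell ms n) : ncell [:: nth 0 ms j] n :=
  pcell [:: nth 0 ms j] (pproj ms j (proj1_sig c)).
Arguments proj ms j {n} c.

Section Projection.
Variables (ms : seq nat) (j : nat).
Hypotheses (ms_ne : ms != [::]) (ms_pos : all (fun d => 0 < d) ms).

Lemma proj_natural : is_natural (X := neck ms) (Y := neck [:: nth 0 ms j]) (@proj ms j).
Proof.
move=> n m g c.
have c_lt := ncell_bead_lt c; have c_dim := ncell_dim c.
rewrite /proj act_neckE val_pcell // act_pcell //.
rewrite nbeadsE // in c_lt.
case: c c_lt c_dim => [[i [d y]] c_valid] /= i_lt dE; subst d.
rewrite pnormE //; last exact: ltnW.
congr pcell; rewrite /pproj /pact /=.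
case: andP => [[i_gt0 y_alpha] | _] /=; last first.
  by case: eqP => [<- | _]; rewrite ?recast_ccomp ?ccomp_const.
have [<- | ij] := eqVneq i.-1 j.
  have -> : (i == i.-1) = false by lia.
  by rewrite recast_const // ccomp_const ltn_predL i_gt0.
have [<- | ij'] := eqVneq i j.
  have -> : (i < i.-1) = false by lia.
  by rewrite -recast_ccomp // recast_alpha.
have -> : (j < i.-1) = (j < i) by lia.
by rewrite ccomp_const.
Qed.

Lemma bead_sub_necklace i :
  i < size [:: nth 0 ms j] -> nth 0 [:: nth 0 ms j] i = nth 0 ms (j + i).
Proof. by case: i => // _; rewrite addn0. Qed.

Lemma shift_bead1 n (y : cube n (nth 0 ms j)) :
  shift ms j (pcell [:: nth 0 ms j] (0, existT _ _ y)) = pcell ms (j, existT _ _ y).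
Proof.
rewrite shift_pcell; [by rewrite /pshift addn0 | exact: bead_sub_necklace | by [] | by []].
Qed.

Lemma proj_pcell n d (y : cube n d) : j < size ms -> d = nth 0 ms j ->
  proj ms j (pcell ms (j, existT _ d y)) =
  pcell [:: nth 0 ms j] (0, existT _ _ (recast (nth 0 ms j) y)).
Proof.
move=> j_lt dE; rewrite /proj val_pcellE //.
case: andP => [[j_gt0 y_alpha] | _]; rewrite /pproj /= ?eqxx //.
have -> : (j.-1 == j) = false by lia.
have -> : (j < j.-1) = false by lia.
by rewrite recast_alpha.
Qed.

Lemma shift_proj n d (y : cube n d) : j < size ms -> d = nth 0 ms j ->
  shift ms j (proj ms j (pcell ms (j, existT _ d y))) = pcell ms (j, existT _ d y).
Proof.
by move=> j_lt dE; rewrite proj_pcell // shift_bead1; subst d; rewrite recast_id.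
Qed.

Lemma proj_shift n (c : ncell [:: nth 0 ms j] n) : j < size ms ->
  proj ms j (shift ms j c) = c.
Proof.
move=> j_lt; rewrite -(bead1_tagged c); set y := recast _ _.
rewrite -[bead [:: nth 0 ms j] 0 y]/(pcell [:: nth 0 ms j] (0, existT _ _ y)).
by rewrite shift_bead1 proj_pcell // recast_id.
Qed.

Lemma shift1_inj n : j < size ms -> injective (@shift [:: nth 0 ms j] ms j n).
Proof. by move=> j_lt; apply: can_inj (proj_shift (n := n) ^~ j_lt). Qed.

End Projection.

(** * Decompositions of sequences into blocks *)

Lemma block_off0 As : block_off As 0 = 0.
Proof. by rewrite /block_off take0. Qed.

Lemma block_offS A As j : block_off (A :: As) j.+1 = size A + block_off As j.
Proof. by []. Qed.

Lemma block_off_succ (As : seq (seq nat)) j : j < size As ->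
  block_off As j.+1 = block_off As j + size (nth [::] As j).
Proof.
by move=> j_lt; rewrite /block_off (take_nth [::] j_lt) -cats1 map_cat sumn_cat /= addn0.
Qed.

Lemma nth_flatten_block (As : seq (seq nat)) j i :
  j < size As -> i < size (nth [::] As j) ->
  block_off As j + i < size (flatten As) /\
  nth 0 (flatten As) (block_off As j + i) = nth 0 (nth [::] As j) i.
Proof.
elim: As j => [|A As IH] [|j] //= j_lt i_lt.
  rewrite block_off0 add0n size_cat nth_cat i_lt; split => //.
  exact: leq_trans i_lt (leq_addr _ _).
rewrite block_offS -addnA; have [lt_i nth_i] := IH j j_lt i_lt.
rewrite size_cat ltn_add2l nth_cat; split => //.
by rewrite ltnNge leq_addr /= addKn.
Qed.

Definition labels_blocks (As : seq (seq nat)) (J : nat -> nat) :=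
  forall j i, j < size As -> i < size (nth [::] As j) -> J (block_off As j + i) = j.

Lemma labels_blocks_behead A As J : labels_blocks (A :: As) J ->
  labels_blocks As (fun i => (J (size A + i)).-1).
Proof. by move=> JA j i j_lt i_lt; rewrite addnA -block_offS (JA j.+1 i). Qed.

(* A first block shorter than another decomposition's first block would put a
   position labelled 1 inside a block labelled 0. *)
Lemma labels_blocks_head_size A B As Bs J :
  A ++ flatten As = B ++ flatten Bs -> all (fun A => A != [::]) As ->
  labels_blocks (A :: As) J -> labels_blocks (B :: Bs) J -> size B <= size A.
Proof.
move=> eq_flat As_ne JA JB; rewrite leqNgt; apply/negP => lt_AB.
case: As eq_flat As_ne JA => [|A2 As2] eq_flat As_ne JA.
  by move: (congr1 size eq_flat) lt_AB; rewrite /= cats0 size_cat => ->; lia.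
have A2_gt0 : 0 < size A2 by case/andP: As_ne; case: (A2).
by have := JA 1 0 isT A2_gt0; rewrite /block_off /= !addn0 (JB 0 (size A)).
Qed.

Lemma labels_blocks_eq As Bs J : flatten As = flatten Bs -> size As = size Bs ->
  all (fun A => A != [::]) As -> all (fun A => A != [::]) Bs ->
  labels_blocks As J -> labels_blocks Bs J -> As = Bs.
Proof.
elim: As Bs J => [|A As IH] [|B Bs] J //= eq_flat [eq_size] /andP [_ As_ne] /andP [_ Bs_ne] JA JB.
have eq_sz : size A = size B.
  apply/eqP; rewrite eqn_leq (labels_blocks_head_size eq_flat As_ne JA JB).
  by rewrite (labels_blocks_head_size (esym eq_flat) Bs_ne JB JA).
have eq_AB : A = B by move: (congr1 (take (size A)) eq_flat); rewrite eq_sz !take_size_cat.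
subst B; congr cons; apply: IH (labels_blocks_behead JA) (labels_blocks_behead JB) => //.
by move/eqP: eq_flat; rewrite eqseq_cat // => /andP [_ /eqP].
Qed.

Lemma count_prefix (P : pred nat) k :
  (forall i i', i <= i' -> i' < k -> P i' -> P i) ->
  forall i, i < k -> P i = (i < count P (iota 0 k)).
Proof.
elim: k => [|k IH] // P_down i i_lt.
rewrite -[k.+1]addn1 iotaD count_cat /= addn0.
have P_down' i1 i2 : i1 <= i2 -> i2 < k -> P i2 -> P i1.
  by move=> le_i i2_lt; apply: P_down => //; apply: ltnW.
case Pk: (P k).
  have /eqP -> : count P (iota 0 k) == k.
    rewrite -[X in _ == X](size_iota 0 k) -all_count; apply/allP => x.
    by rewrite mem_iota => /andP [_ x_lt]; apply: (P_down x k) => //; apply: ltnW.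
  by rewrite addn1 i_lt; apply: (P_down i k).
rewrite addn0; case: (ltnP i k) => [i_lt' | i_ge]; first exact: IH P_down' i i_lt'.
have -> : i = k by lia.
by rewrite Pk ltnNge (leq_trans (count_size _ _)) // size_iota.
Qed.

Lemma flatten_iota (off : nat -> nat) L :
  off 0 = 0 -> (forall j, j < L -> off j <= off j.+1) ->
  flatten [seq iota (off j) (off j.+1 - off j) | j <- iota 0 L] = iota 0 (off L).
Proof.
move=> off0 off_mono; elim: L off_mono => [|L IH] off_mono; first by rewrite /= off0.
rewrite -addn1 iotaD map_cat flatten_cat IH => [|j j_lt]; last exact/off_mono/ltnW.
by rewrite add0n /= cats0 addn1 -[in RHS](subnKC (off_mono L (ltnSn L))) iotaD.
Qed.

(** * Maps between necklaces *)

Definition block_decomposition ns ms (f : forall n, ncell ns n -> ncell ms n)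
    (As : seq (seq nat))
    (fs : forall j n, ncell (nth [::] As j) n -> ncell [:: nth 0 ms j] n) :=
  [/\ size As = size ms, all (fun A => A != [::]) As, flatten As = ns,
      forall j, j < size ms -> is_nec_map (fs j) &
      forall j, j < size ms -> forall n (c : ncell (nth [::] As j) n),
        f n (shift ns (block_off As j) c) = shift ms j (fs j n c)].
Arguments block_decomposition {ns ms} f As fs.

Section NecMapBlocks.
Variables (ns ms : seq nat) (f : forall n, ncell ns n -> ncell ms n).
Arguments f : clear implicits.
Hypotheses (ns_ne : ns != [::]) (ns_pos : all (fun d => 0 < d) ns)
           (ms_ne : ms != [::]) (ms_pos : all (fun d => 0 < d) ms).
Hypothesis f_nec : is_nec_map f.

Let size_ns_gt0 : 0 < size ns. Proof. by case: (ns) ns_ne. Qed.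
Let size_ms_gt0 : 0 < size ms. Proof. by case: (ms) ms_ne. Qed.
Let f_natural : is_natural (X := neck ns) (Y := neck ms) f. Proof. by case: f_nec. Qed.

Definition top_image i := f (nth 0 ns i) (bead ns i (idc _)).
Definition target i := (proj1_sig (top_image i)).1.
Definition target_dim i := tag (proj1_sig (top_image i)).2.
Definition bead_map i : cube (nth 0 ns i) (target_dim i) := tagged (proj1_sig (top_image i)).2.

Lemma target_lt i : target i < size ms.
Proof. by rewrite /target -(nbeadsE ms_ne) ncell_bead_lt. Qed.

Lemma target_dimE i : target_dim i = nth 0 ms (target i).
Proof. exact: ncell_dim. Qed.

Lemma top_imageE i : proj1_sig (top_image i) = (target i, existT _ (target_dim i) (bead_map i)).
Proof. by rewrite /target /target_dim /bead_map; case: (proj1_sig _) => a [b y]. Qed.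

Lemma top_image_normal i : (target i == 0) || ~~ is_alpha (bead_map i).
Proof. by case/and3P: (proj2_sig (top_image i)). Qed.

Lemma f_bead i n (x : cube n (nth 0 ns i)) : i < size ns ->
  f n (bead ns i x) = pcell ms (target i, existT _ (target_dim i) (ccomp (bead_map i) x)).
Proof.
move=> i_lt; rewrite -[x]ccomp_idl bead_act ?nbeadsE // f_natural act_neckE top_imageE.
by rewrite ccomp_idl.
Qed.

Lemma f_pcell i n d (y : cube n d) : i < size ns -> d = nth 0 ns i ->
  f n (pcell ns (i, existT _ d y)) =
  pcell ms (target i, existT _ (target_dim i) (ccomp (bead_map i) (recast (nth 0 ns i) y))).
Proof. by move=> i_lt dE; subst d; rewrite recast_id -f_bead. Qed.

Lemma val_f_bead i n (x : cube n (nth 0 ns i)) : i < size ns ->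
  proj1_sig (f n (bead ns i x)) =
  if (0 < target i) && is_alpha (ccomp (bead_map i) x)
  then ((target i).-1, existT _ _ (constc n (nth 0 ms (target i).-1) true))
  else (target i, existT _ (target_dim i) (ccomp (bead_map i) x)).
Proof. by move=> i_lt; rewrite f_bead // val_pcellE ?target_lt ?target_dimE. Qed.

(* A cube map sending omega to alpha is constant at alpha (cube maps are
   monotone), so the normal form of the image of omega is never shifted. *)
Lemma val_f_bead_omega i : i < size ns ->
  proj1_sig (f 0 (bead ns i (comega _))) =
  (target i, existT _ (target_dim i) (ccomp (bead_map i) (comega _))).
Proof.
move=> i_lt; rewrite val_f_bead //; case: andP => // [[target_gt0 omega_alpha]].
have := top_image_normal i; rewrite (is_alpha_of_omega omega_alpha) orbF => /eqP target0.
by rewrite target0 in target_gt0.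
Qed.

Lemma target0 : target 0 = 0 /\ is_alpha (ccomp (bead_map 0) (calpha _)).
Proof.
have m0_gt0 : 0 < nth 0 ms 0 := all_pos_nth ms_pos size_ms_gt0.
have := val_f_bead (calpha _) size_ns_gt0.
case: f_nec => _ f_alpha _; rewrite -/(nalpha ns) f_alpha val_nalpha //.
case: andP => [_ /pre_eq_const [_ eq_const] | _ /pre_eq_const [<- eq_const]].
  by have := eq_const true; rewrite eqxx (negbTE (@cconst_neq 0 _ false true m0_gt0 isT)).
by split => //; rewrite /is_alpha -eq_const eqxx.
Qed.

Lemma target_last :
  target (size ns).-1 = (size ms).-1 /\ is_omega (ccomp (bead_map (size ns).-1) (comega _)).
Proof.
have last_lt : (size ms).-1 < size ms by rewrite prednK.
have := @val_f_bead_omega (size ns).-1; rewrite ltn_predL => /(_ size_ns_gt0).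
case: f_nec => _ _ f_omega; rewrite -/(nomega ns) f_omega val_nomega //.
by case/pre_eq_const => <- eq_const; split => //; rewrite /is_omega -eq_const eqxx.
Qed.

(* Both sides of the junction vertex of beads [i] and [i+1] are mapped to the
   same normal form. *)
Lemma target_step i : i.+1 < size ns ->
  target i.+1 = target i \/
  [/\ target i.+1 = (target i).+1, is_omega (ccomp (bead_map i) (comega _))
    & is_alpha (ccomp (bead_map i.+1) (calpha _))].
Proof.
move=> i1_lt; have := congr1 (@proj1_sig _ _) (congr1 (f 0) (bead_junction ns i)).
rewrite val_f_bead // (val_f_bead_omega (ltnW i1_lt)).
case: andP => [[target_gt0 map_alpha] | _] /pre_eq_const [eq_target eq_const]; last by left.
by right; split => //; [rewrite -eq_target prednK | rewrite /is_omega -eq_const eqxx].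
Qed.

Lemma target_mono i i' : i <= i' -> i' < size ns -> target i <= target i'.
Proof.
elim: i' => [|i' IH] le_ii' i'_lt; first by move: le_ii'; rewrite leqn0 => /eqP ->.
case: (ltnP i i'.+1) => [lt_ii' | ge_ii']; last by have -> : i = i'.+1 by lia.
apply: leq_trans (IH lt_ii' (ltnW i'_lt)) _.
by case: (target_step i'_lt) => [-> | [-> _ _]].
Qed.

(* The index of the first bead of [ns] whose target is [j] or later. *)
Definition block_start j := count (fun i => target i < j) (iota 0 (size ns)).

Lemma target_lt_block_start j i : i < size ns -> (target i < j) = (i < block_start j).
Proof.
apply: count_prefix => i1 i2 le_i i2_lt target_lt.
exact: leq_ltn_trans (target_mono le_i i2_lt) target_lt.
Qed.

Lemma block_start0 : block_start 0 = 0.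
Proof. by rewrite /block_start (@eq_count _ _ pred0) ?count_pred0. Qed.

Lemma block_start_last : block_start (size ms) = size ns.
Proof.
rewrite /block_start (@eq_count _ _ predT) ?count_predT ?size_iota //.
by move=> i; rewrite target_lt.
Qed.

Lemma block_start_mono j j' : j <= j' -> block_start j <= block_start j'.
Proof. by move=> le_jj'; apply: sub_count => i /= lt_ij; apply: leq_trans lt_ij le_jj'. Qed.

Lemma block_start_le j : block_start j <= size ns.
Proof. by rewrite -[X in _ <= X](size_iota 0) count_size. Qed.

Lemma target_eq i j : i < size ns -> (target i == j) = (block_start j <= i < block_start j.+1).
Proof.
move=> i_lt; rewrite -(target_lt_block_start j.+1 i_lt) leqNgt.
by rewrite -(target_lt_block_start j i_lt) ltnS -leqNgt eq_sym eqn_leq.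
Qed.

Lemma block_start_lt_size j : j < size ms -> block_start j < size ns.
Proof.
move=> j_lt; rewrite ltn_neqAle block_start_le andbT; apply/eqP => start_eq.
have last_lt : (size ns).-1 < size ns by rewrite prednK.
have := target_lt_block_start j last_lt; rewrite start_eq last_lt.
by case: target_last => -> _; lia.
Qed.

(* Targets increase by steps of at most one, so the first bead with target at
   least [j] has target exactly [j], and it starts at alpha. *)
Lemma target_block_start j : j < size ms ->
  target (block_start j) = j /\ is_alpha (ccomp (bead_map (block_start j)) (calpha _)).
Proof.
move=> j_lt; have start_lt := block_start_lt_size j_lt.
case: (posnP j) => [-> | j_gt0]; first by rewrite block_start0; exact: target0.
have start_gt0 : 0 < block_start j.
  by rewrite -target_lt_block_start //; case: target0 => -> _.
have ge_j : j <= target (block_start j) by rewrite leqNgt target_lt_block_start // ltnn.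
have lt_j : target (block_start j).-1 < j.
  by rewrite target_lt_block_start ?ltn_predL // (leq_ltn_trans (leq_pred _)).
have := @target_step (block_start j).-1; rewrite prednK // => /(_ start_lt).
case=> [E | [E _ start_alpha]]; first by move: ge_j lt_j; rewrite E; lia.
by split=> //; move: ge_j lt_j; rewrite E; lia.
Qed.

Lemma block_start_lt j : j < size ms -> block_start j < block_start j.+1.
Proof.
move=> j_lt; have [target_start _] := target_block_start j_lt.
by have := target_eq j (block_start_lt_size j_lt); rewrite target_start eqxx => /esym /andP [].
Qed.

Lemma target_block_end j : j < size ms ->
  target (block_start j.+1).-1 = j /\
  is_omega (ccomp (bead_map (block_start j.+1).-1) (comega _)).
Proof.
move=> j_lt; have start_lt := block_start_lt j_lt.
have end_gt0 : 0 < block_start j.+1 by apply: leq_ltn_trans start_lt.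
have end_lt : (block_start j.+1).-1 < size ns.
  by apply: leq_trans (block_start_le j.+1); rewrite prednK.
have target_end : target (block_start j.+1).-1 = j.
  by apply/eqP; rewrite target_eq // -ltnS prednK // start_lt leqnn.
split=> //; case: (ltngtP (block_start j.+1) (size ns)) => [next_lt | | ->].
- have ge_j1 : j.+1 <= target (block_start j.+1).
    by rewrite leqNgt target_lt_block_start // ltnn.
  have := @target_step (block_start j.+1).-1; rewrite prednK // => /(_ next_lt).
  by case=> [E | [_ ->]] //; move: ge_j1; rewrite E target_end ltnn.
- by rewrite ltnNge block_start_le.
- by case: target_last.
Qed.

Definition blocks : seq (seq nat) :=
  [seq [seq nth 0 ns i | i <- iota (block_start j) (block_start j.+1 - block_start j)]
  | j <- iota 0 (size ms)].

Lemma size_blocks : size blocks = size ms.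
Proof. by rewrite size_map size_iota. Qed.

Lemma nth_blocks j : j < size ms ->
  nth [::] blocks j =
  [seq nth 0 ns i | i <- iota (block_start j) (block_start j.+1 - block_start j)].
Proof. by move=> j_lt; rewrite (nth_map 0) ?size_iota // nth_iota. Qed.

Lemma size_nth_blocks j : j < size ms ->
  size (nth [::] blocks j) = block_start j.+1 - block_start j.
Proof. by move=> j_lt; rewrite nth_blocks // size_map size_iota. Qed.

Lemma nth_blocks_ne j : j < size ms -> nth [::] blocks j != [::].
Proof. by move=> j_lt; rewrite -size_eq0 size_nth_blocks // subn_eq0 -ltnNge block_start_lt. Qed.

Lemma blocks_ne : all (fun A => A != [::]) blocks.
Proof. by apply/(all_nthP [::]) => j; rewrite size_blocks; apply: nth_blocks_ne. Qed.

Lemma flatten_blocks : flatten blocks = ns.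
Proof.
have -> : blocks = map (map (nth 0 ns))
    [seq iota (block_start j) (block_start j.+1 - block_start j) | j <- iota 0 (size ms)].
  by rewrite /blocks -map_comp.
rewrite -map_flatten flatten_iota ?block_start0 //.
  by rewrite block_start_last -/(mkseq _ _) mkseq_nth.
by move=> j _; apply: block_start_mono.
Qed.

Lemma block_off_blocks j : j <= size ms -> block_off blocks j = block_start j.
Proof.
elim: j => [|j IH] j_le; first by rewrite block_off0 block_start0.
rewrite block_off_succ ?size_blocks // IH ?(ltnW j_le) // size_nth_blocks //.
by rewrite subnKC // block_start_mono.
Qed.

Lemma nth_nth_blocks j i : j < size ms -> i < size (nth [::] blocks j) ->
  nth 0 (nth [::] blocks j) i = nth 0 ns (block_start j + i).
Proof.
move=> j_lt; rewrite size_nth_blocks // => i_lt.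
by rewrite nth_blocks // (nth_map 0) ?size_iota // nth_iota.
Qed.

Lemma target_blocks j i : j < size ms -> i < size (nth [::] blocks j) ->
  block_start j + i < size ns /\ target (block_start j + i) = j.
Proof.
move=> j_lt; rewrite size_nth_blocks // => i_lt.
have lt_size : block_start j + i < size ns.
  by apply: leq_trans (block_start_le j.+1); rewrite -ltn_subRL.
by split=> //; apply/eqP; rewrite target_eq // leq_addr /= -ltn_subRL.
Qed.

Definition block_maps j n (c : ncell (nth [::] blocks j) n) : ncell [:: nth 0 ms j] n :=
  proj ms j (f n (shift ns (block_off blocks j) c)).
Arguments block_maps j {n} c.

Lemma block_maps_spec j n (c : ncell (nth [::] blocks j) n) : j < size ms ->
  f n (shift ns (block_off blocks j) c) = shift ms j (block_maps j c).
Proof.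
move=> j_lt; rewrite /block_maps block_off_blocks; last exact: ltnW.
have c_lt := ncell_bead_lt c; have c_dim := ncell_dim c.
rewrite nbeadsE ?nth_blocks_ne // in c_lt.
case: c c_lt c_dim => [[i [d y]] c_valid] /= i_lt dE.
have [lt_size target_i] := target_blocks j_lt i_lt.
rewrite -[shift ns _ _]/(pcell ns (block_start j + i, existT _ d y)).
rewrite f_pcell //; last by rewrite dE nth_nth_blocks.
by rewrite target_i shift_proj // target_dimE target_i.
Qed.

Lemma blocks_in_ns j : j < size ms -> forall i, i < size (nth [::] blocks j) ->
  nth 0 (nth [::] blocks j) i = nth 0 ns (block_off blocks j + i).
Proof. by move=> j_lt i i_lt; rewrite nth_nth_blocks // block_off_blocks // ltnW. Qed.

Lemma block_maps_natural j : j < size ms ->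
  is_natural (X := neck (nth [::] blocks j)) (Y := neck [:: nth 0 ms j]) (@block_maps j).
Proof.
move=> j_lt n m g c; have A_le : block_off blocks j + size (nth [::] blocks j) <= size ns.
  rewrite (block_off_blocks (ltnW j_lt)) size_nth_blocks // subnKC ?block_start_mono //.
  exact: block_start_le.
rewrite /block_maps (shift_natural (blocks_in_ns j_lt) (nth_blocks_ne j_lt) A_le).
by rewrite f_natural proj_natural.
Qed.

Lemma block_maps_pcell j i n (y : cube n (nth 0 (nth [::] blocks j) i)) :
  j < size ms -> i < size (nth [::] blocks j) ->
  block_maps j (pcell _ (i, existT _ _ y)) =
  pcell [:: nth 0 ms j] (0, existT _ _ (recast (nth 0 ms j)
    (ccomp (bead_map (block_start j + i)) (recast (nth 0 ns (block_start j + i)) y)))).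
Proof.
move=> j_lt i_lt; have [lt_size target_i] := target_blocks j_lt i_lt.
rewrite /block_maps shift_pcell //; last exact: blocks_in_ns.
rewrite /pshift /= (block_off_blocks (ltnW j_lt)) f_pcell ?nth_nth_blocks //.
by rewrite target_i proj_pcell // target_dimE target_i.
Qed.

Lemma block_maps_alpha j : j < size ms ->
  block_maps j (nalpha (nth [::] blocks j)) = nalpha [:: nth 0 ms j].
Proof.
move=> j_lt; have A_gt0 : 0 < size (nth [::] blocks j) by rewrite lt0n size_eq0 nth_blocks_ne.
have [_ start_alpha] := target_block_start j_lt.
rewrite -[nalpha _]/(pcell _ (0, existT _ _ (calpha (nth 0 (nth [::] blocks j) 0)))).
rewrite block_maps_pcell // addn0 recast_const; last by rewrite nth_nth_blocks ?addn0.
by rewrite recast_alpha.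
Qed.

Lemma block_maps_omega j : j < size ms ->
  block_maps j (nomega (nth [::] blocks j)) = nomega [:: nth 0 ms j].
Proof.
move=> j_lt; set A := nth [::] blocks j.
have last_lt : (size A).-1 < size A by rewrite ltn_predL lt0n size_eq0 nth_blocks_ne.
have last_end : block_start j + (size A).-1 = (block_start j.+1).-1.
  by rewrite size_nth_blocks //; have := block_start_lt j_lt; lia.
have [target_end end_omega] := target_block_end j_lt.
rewrite -[nomega A]/(pcell _ ((size A).-1, existT _ _ (comega (nth 0 A (size A).-1)))).
rewrite block_maps_pcell // recast_const ?nth_nth_blocks // last_end.
by rewrite (recast_omega _ end_omega) // target_dimE target_end.
Qed.

Lemma block_maps_nec j : j < size ms -> is_nec_map (@block_maps j).
Proof.
move=> j_lt; split; first exact: block_maps_natural.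
  exact: block_maps_alpha.
exact: block_maps_omega.
Qed.

Lemma block_decomposition_exists : exists As fs, block_decomposition f As fs.
Proof.
exists blocks, @block_maps; split.
- exact: size_blocks.
- exact: blocks_ne.
- exact: flatten_blocks.
- exact: block_maps_nec.
- by move=> j j_lt n c; apply: block_maps_spec.
Qed.

Lemma bead_map_const_bead_const i e : i < size ns ->
  proj1_sig (bead_map i) = cconst _ _ e -> bead_const f i.
Proof.
move=> i_lt map_const; exists (f 0 (bead ns i (calpha _))) => n x.
rewrite !f_bead // act_pcell /= ?target_dimE ?nbeadsE ?target_lt //.
congr (pcell ms (_, existT _ _ _)); apply/cube_val_inj/ffunP => y.
by rewrite /= !ffunE map_const !ffunE.
Qed.

Lemma target_of_top_image i j (y : cube (nth 0 ns i) (nth 0 ms j)) :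
  i < size ns -> j < size ms -> ~ bead_const f i ->
  top_image i = pcell ms (j, existT _ _ y) -> target i = j.
Proof.
move=> i_lt j_lt nonconst /(congr1 (@proj1_sig _ _)); rewrite top_imageE val_pcellE //.
case: andP => [_ /pre_eq_const [_ map_omega] | _ /pre_eq_const [] //].
case: nonconst; apply: (@bead_map_const_bead_const i true) => //.
by apply/eqP; rewrite map_omega eqxx.
Qed.

(* Without constant beads, the normal form of the image of each top cell
   determines the block containing the bead. *)
Lemma block_decomposition_targets Bs gs :
  (forall i, i < size ns -> ~ bead_const f i) ->
  block_decomposition f Bs gs -> labels_blocks Bs target.
Proof.
move=> nonconst [size_Bs _ flat_Bs _ f_shift] j i' j_lt i'_lt.
have Bs_in_ns i'' : i'' < size (nth [::] Bs j) ->
    nth 0 (nth [::] Bs j) i'' = nth 0 ns (block_off Bs j + i'').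
  by move=> i''_lt; have [_ <-] := nth_flatten_block j_lt i''_lt; rewrite flat_Bs.
have [i_lt _] := nth_flatten_block j_lt i'_lt; rewrite flat_Bs in i_lt.
rewrite size_Bs in j_lt; apply: (target_of_top_image i_lt j_lt (nonconst _ i_lt)).
have := f_shift j j_lt _ (pcell _ (i', existT _ _ (idc (nth 0 ns (block_off Bs j + i'))))).
rewrite shift_pcell //; last by rewrite /= Bs_in_ns.
rewrite -(bead1_tagged (gs _ _ _)).
by rewrite -[bead [:: _] 0 _]/(pcell [:: nth 0 ms j] (0, existT _ _ _)) shift_bead1; apply.
Qed.

Lemma block_decomposition_unique : (forall i, i < size ns -> ~ bead_const f i) ->
  forall As fs Bs gs, block_decomposition f As fs -> block_decomposition f Bs gs ->
  As = Bs /\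
  forall j n (x : ncell (nth [::] As j) n) (y : ncell (nth [::] Bs j) n),
    j < size ms -> proj1_sig x = proj1_sig y -> proj1_sig (fs j n x) = proj1_sig (gs j n y).
Proof.
move=> nonconst As fs Bs gs decA decB.
have eq_AB : As = Bs.
  case: (decA) (decB) => [size_As As_ne flat_As _ _] [size_Bs Bs_ne flat_Bs _ _].
  apply: labels_blocks_eq (block_decomposition_targets nonconst decA)
                         (block_decomposition_targets nonconst decB) => //.
  - by rewrite flat_As flat_Bs.
  - by rewrite size_As size_Bs.
subst Bs; split=> // j n x y j_lt /val_inj <-; congr proj1_sig.
case: decA decB => [_ _ _ _ f_fs] [_ _ _ _ f_gs].
by apply: (shift1_inj ms_ne ms_pos j_lt); rewrite -f_fs // -f_gs.
Qed.

End NecMapBlocks.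

Theorem proposition2p2 :
  (* (1) maps (n_1,...,n_k) -> (m) *)
  (forall (ns : seq nat) (m : nat),
     ns != [::] -> all (fun d => 0 < d) ns -> 0 < m ->
     forall F : forall n, ncell ns n -> ncell [:: m] n,
     is_nec_map F ->
     let P := fun phi : forall i n, cube n (nth 0 ns i) -> cube n m =>
       [/\ forall i, i < size ns -> is_natural (X := rep (nth 0 ns i)) (Y := rep m) (phi i),
           phi 0 0 (calpha _) = calpha m,
           forall i, i.+1 < size ns -> phi i 0 (comega _) = phi i.+1 0 (calpha _),
           phi (size ns).-1 0 (comega _) = comega m &
           forall i n (x : cube n (nth 0 ns i)), i < size ns ->
             F n (bead ns i x) = bead [:: m] 0 (phi i n x)] in
     (exists phi, P phi) /\
     (forall phi psi, P phi -> P psi ->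
        forall i n (x : cube n (nth 0 ns i)), i < size ns -> phi i n x = psi i n x) /\
     m <= sumn ns)
  /\
  (* (2) maps (n_1,...,n_k) -> (m_1,...,m_l) *)
  (forall (ns ms : seq nat),
     ns != [::] -> all (fun d => 0 < d) ns ->
     ms != [::] -> all (fun d => 0 < d) ms ->
     forall f : forall n, ncell ns n -> ncell ms n,
     is_nec_map f ->
     let Q := fun (As : seq (seq nat))
                  (fs : forall j n, ncell (nth [::] As j) n -> ncell [:: nth 0 ms j] n) =>
       [/\ size As = size ms, all (fun A => A != [::]) As, flatten As = ns,
           forall j, j < size ms -> is_nec_map (fs j) &
           forall j, j < size ms -> forall n (c : ncell (nth [::] As j) n),
             f n (shift ns (block_off As j) c) = shift ms j (fs j n c)] in
     (exists As fs, Q As fs) /\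
     ((forall i, i < size ns -> ~ bead_const f i) ->
      forall As fs Bs gs, Q As fs -> Q Bs gs ->
        As = Bs /\
        forall j n (x : ncell (nth [::] As j) n) (y : ncell (nth [::] Bs j) n),
          j < size ms -> proj1_sig x = proj1_sig y ->
          proj1_sig (fs j n x) = proj1_sig (gs j n y))).
Proof.
split=> [ns m ns_ne _ _ F F_nec P | ns ms ns_ne ns_pos ms_ne ms_pos f f_nec Q].
  have [phi phi_fact] := bead_factorization_exists ns_ne F_nec.
  split; first by exists phi.
  split; first exact: bead_factorization_unique.
  case: phi_fact => phi_nat phi_alpha phi_junction phi_omega _.
  exact: cube_chain_dim_le ns_ne phi_nat phi_alpha phi_junction phi_omega.
split; first exact: block_decomposition_exists.
exact: block_decomposition_unique.
Qed.
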